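(* Let $V$ be a Calabi–Yau threefold with $h^{2,0}(V)=0$ and $h^{1,1}(V)=3$, with cup-product cubic form $f$ and Kähler cone $\mathcal{K}(V)$. Suppose there is a nonzero point $y^0$ on the boundary of $\mathcal{K}(V)$ such that: <ul> <li>$f(y^0)\neq0$;</li> <li>$H(y^0)=0$;</li> <li>$\mathrm{tr}\big(B(y^0)\,C(i,j)\big)\neq0$ for some $i,j\in\{1,2,3\}$.</li> </ul> Then the scalar curvature of the AMWP metric on $\mathcal{K}_{\mathbb{C}}(V)$ is unbounded above as one approaches the ray through $y^0$. That is, for every neighbourhood $N$ of $y^0$ in $\mathbb{R}^3$, the scalar curvature is unbounded above on $\{x+iy: y\in N\cap\mathcal{K}(V)\}$.
   Context: $f(y_1,y_2,y_3)$ is the cup-product cubic on $H^2(V,\mathbb{R})\cong\mathbb{R}^3$ in linear coordinates. $H=\det(\partial^2f/\partial y_i\partial y_j)$ is its Hessian determinant. $G$ is the matrix $G_{ij}=(\partial f/\partial y_i)(\partial f/\partial y_j)-f\,\partial^2 f/\partial y_i\partial y_j$, and $B=\mathrm{adj}(G)$ is its adjugate (transposed cofactor matrix). $C(i,j)$ is the $3\times3$ matrix with entries $C(i,j)_{pq}=f_{ijp}f_{ijq}$, where $f_{ijp}=\partial^3 f/\partial y_i\partial y_j\partial y_p$. $\mathcal{K}_{\mathbb{C}}(V)=(H^2(V,\mathbb{R})+i\mathcal{K}(V))/\mathrm{im}H^2(V,\mathbb{Z})$, with coordinates $t_j=x_j+iy_j$. The AMWP metric is the Kähler metric with potential $-\log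 f(y)$. Its scalar curvature is the usual scalar curvature of this Kähler metric (with the convention that the upper half-plane metric with potential $-\log\mathrm{Im}\,t$ has negative curvature). *)

From Stdlib Require Import Reals ClassicalEpsilon.
Open Scope R_scope.

(** Points of R^3 are functions nat -> R; only coordinates 0,1,2 matter
    (coordinates y_1,y_2,y_3 of the paper are indices 0,1,2). *)
Definition vec := nat -> R.

Definition sum3 (F : nat -> R) : R := F 0%nat + F 1%nat + F 2%nat.

Definition upd (y : vec) (i : nat) (s : R) : vec :=
  fun k => if Nat.eqb k i then s else y k.

(** genuine partial derivative d/dy_i (chosen by epsilon; it is the
    derivative wherever the partial derivative exists). *)
Definition pd (i : nat) (F : vec -> R) : vec -> R :=
  fun y => epsilon (inhabits 0)
             (fun l => derivable_pt_lim (fun s => F (upd y i s)) (y i) l).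

(** 3x3 matrices as functions nat -> nat -> R (indices mod 3 in cofactors). *)
Definition cof3 (M : nat -> nat -> R) (i j : nat) : R :=
  let i1 := ((i + 1) mod 3)%nat in let i2 := ((i + 2) mod 3)%nat in
  let j1 := ((j + 1) mod 3)%nat in let j2 := ((j + 2) mod 3)%nat in
  M i1 j1 * M i2 j2 - M i1 j2 * M i2 j1.
Definition det3 (M : nat -> nat -> R) : R := sum3 (fun j => M 0%nat j * cof3 M 0%nat j).
Definition adj3 (M : nat -> nat -> R) : nat -> nat -> R := fun i j => cof3 M j i.
Definition tr3 (M : nat -> nat -> R) : R := sum3 (fun i => M i i).
Definition mul3 (M N : nat -> nat -> R) : nat -> nat -> R :=
  fun i k => sum3 (fun j => M i j * N j k).

Definition cubic (d : nat -> nat -> nat -> R) (y : vec) : R :=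
  sum3 (fun i => sum3 (fun j => sum3 (fun k => d i j k * y i * y j * y k))).

Definition Hess (f : vec -> R) (y : vec) : R := det3 (fun i j => pd i (pd j f) y).
Definition Gmat (f : vec -> R) (y : vec) : nat -> nat -> R :=
  fun i j => pd i f y * pd j f y - f y * pd i (pd j f) y.
Definition Bmat (f : vec -> R) (y : vec) : nat -> nat -> R := adj3 (Gmat f y).
Definition Cmat (f : vec -> R) (i j : nat) (y : vec) : nat -> nat -> R :=
  fun p q => pd i (pd j (pd p f)) y * pd i (pd j (pd q f)) y.

(** AMWP metric: Kaehler potential -log f(Im t) on the tube domain.
    In coordinates t_j = x_j + i y_j, for a function of y only,
    d/dt_i d/dtbar_j = (1/4) d^2/dy_i dy_j, so g_{i jbar} depends only on y. *)
Definition potential (f : vec -> R) : vec -> R := fun y => - ln (f y).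
Definition gmet (f : vec -> R) (y : vec) : nat -> nat -> R :=
  fun i j => / 4 * pd i (pd j (potential f)) y.
Definition logdetg (f : vec -> R) : vec -> R := fun y => ln (det3 (gmet f y)).
(** Ricci form R_{i jbar} = - d_i d_jbar log det g = -(1/4) d^2/dy_i dy_j log det g;
    scalar curvature s = g^{i jbar} R_{i jbar}.  (Upper half-plane: s = -2 < 0.) *)
Definition scal (f : vec -> R) (y : vec) : R :=
  sum3 (fun i => sum3 (fun j =>
    (adj3 (gmet f y) i j / det3 (gmet f y)) *
    (- / 4 * pd i (pd j (logdetg f)) y))).

Definition close (y z : vec) (eps : R) : Prop :=
  Rabs (y 0%nat - z 0%nat) < eps /\ Rabs (y 1%nat - z 1%nat) < eps /\
  Rabs (y 2%nat - z 2%nat) < eps.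

Definition nonzero3 (y : vec) : Prop :=
  y 0%nat <> 0 \/ y 1%nat <> 0 \/ y 2%nat <> 0.

Definition kahler_cone_like (f : vec -> R) (K : vec -> Prop) : Prop :=
  (forall y, K y -> exists eps, eps > 0 /\ forall z, close z y eps -> K z) /\
  (forall y z lam, K y -> K z -> 0 <= lam <= 1 ->
     K (fun k => lam * y k + (1 - lam) * z k)) /\
  (forall y lam, K y -> lam > 0 -> K (fun k => lam * y k)) /\
  (forall y, K y -> f y > 0) /\
  (* Hodge index: the AMWP metric is positive definite on K *)
  (forall y v, K y -> nonzero3 v ->
     sum3 (fun i => sum3 (fun j => gmet f y i j * v i * v j)) > 0).

Definition in_boundary (K : vec -> Prop) (y : vec) : Prop :=
  ~ K y /\ forall eps, eps > 0 -> exists z, K z /\ close z y eps.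

From Stdlib Require Import Reals Lra Lia Psatz Nsatz ClassicalEpsilon FunctionalExtensionality.
Open Scope R_scope.

(** Write [A(y)] for the Hessian matrix of the cubic [f], [H = det A],
    [G = grad f (grad f)^T - f A] and [B = adj G].  The proof runs as follows.
    - Every partial derivative met in the definitions is that of a polynomial
      along a coordinate line, so [pd] can be computed exactly: this yields
      [g = G/(4 f^2)], [det g = H/(128 f^3)] and the closed formula
      [scal = -9 + 2 (Q + H P) / (f H^3)] with [Q = (grad H)^T B (grad H)] and
      [P = - sum B_ij H_ij], valid wherever [f > 0] and [H > 0].
    - On the Kaehler cone [G] is positive definite, hence [f, H > 0] and [B]
      is positive semidefinite; these facts pass to the limit [y0].
    - At [y0], [H = 0] forces [B = -(f^2/2) adj A] with [adj A] of rank one,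
      [adj A = w w^T / alpha], [alpha < 0].  A linear-algebra analysis then
      gives [Q(y0) > 0] or [P(y0) > 0] (a third option is ruled out since
      [H > 0] on the segment from [y0] into the cone).
    - Along that segment [f H^3 -> 0] (resp. [f H^2 -> 0]) while the numerator
      stays positive, so the scalar curvature exceeds any bound. *)

Definition mat := nat -> nat -> R.

(** ** Partial derivatives computed along coordinate lines *)

Lemma upd_same (y : vec) (i : nat) : upd y i (y i) = y.
Proof.
  apply functional_extensionality; intro k; unfold upd.
  destruct (Nat.eqb_spec k i); subst; reflexivity.
Qed.

Lemma pd_unique (F : vec -> R) i y l :
  derivable_pt_lim (fun s => F (upd y i s)) (y i) l -> pd i F y = l.
Proof.
  intro H. unfold pd.
  assert (E : exists l0, derivable_pt_lim (fun s => F (upd y i s)) (y i) l0)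
    by (exists l; exact H).
  eapply uniqueness_limite; [apply (epsilon_spec (inhabits 0) _ E) | exact H].
Qed.

Lemma derivable_pt_lim_local (F1 F2 : R -> R) x l delta :
  delta > 0 -> (forall s, Rabs (s - x) < delta -> F1 s = F2 s) ->
  derivable_pt_lim F1 x l -> derivable_pt_lim F2 x l.
Proof.
  intros Hd Heq H eps Heps.
  destruct (H eps Heps) as [d1 Hd1].
  assert (Hm : 0 < Rmin d1 delta) by (apply Rmin_pos; [apply (cond_pos d1)|lra]).
  exists (mkposreal _ Hm). intros h Hh Hlt. simpl in Hlt.
  pose proof (Rmin_l d1 delta). pose proof (Rmin_r d1 delta).
  rewrite <- (Heq x) by (rewrite Rminus_diag, Rabs_R0; lra).
  rewrite <- (Heq (x + h)) by (replace (x + h - x) with h by ring; lra).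
  apply Hd1; auto; lra.
Qed.

(** A set is open along coordinate lines if it contains a segment of every
    coordinate line through each of its points; this is all [pd] sees. *)
Definition coord_open (U : vec -> Prop) : Prop :=
  forall y i, (i < 3)%nat -> U y -> exists delta, delta > 0 /\
    forall s, Rabs (s - y i) < delta -> U (upd y i s).

Lemma pd_local (U : vec -> Prop) (G Gj : vec -> R) i y l :
  (i < 3)%nat -> coord_open U -> U y -> (forall z, U z -> G z = Gj z) ->
  derivable_pt_lim (fun s => Gj (upd y i s)) (y i) l -> pd i G y = l.
Proof.
  intros Hi HU Hy Heq Hd. apply pd_unique.
  destruct (HU y i Hi Hy) as [delta [Hdp Hdel]].
  apply (derivable_pt_lim_local (fun s => Gj (upd y i s)) _ _ _ delta Hdp); auto.
  intros s Hs. symmetry. apply Heq, Hdel; auto.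
Qed.

Lemma derivable_cubic_poly (g : R -> R) x a b c e :
  (forall s, g s = a + b*(s-x) + c*(s-x)^2 + e*(s-x)^3) -> derivable_pt_lim g x b.
Proof.
  intros Hg eps Heps.
  set (K := Rabs c + Rabs e + 1).
  assert (HK : K > 0) by (unfold K; pose proof (Rabs_pos c); pose proof (Rabs_pos e); lra).
  assert (Hm : 0 < Rmin 1 (eps / K)) by (apply Rmin_pos; [lra| apply Rdiv_lt_0_compat; lra]).
  exists (mkposreal _ Hm). intros h Hh Hlt. simpl in Hlt.
  rewrite !Hg.
  replace ((a + b * (x + h - x) + c * (x + h - x) ^ 2 + e * (x + h - x) ^ 3 -
     (a + b * (x - x) + c * (x - x) ^ 2 + e * (x - x) ^ 3)) / h - b)
    with (h * (c + e * h)) by (field; auto).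
  assert (H1 : Rabs h < 1) by (eapply Rlt_le_trans; [exact Hlt | apply Rmin_l]).
  assert (H2 : Rabs h < eps / K) by (eapply Rlt_le_trans; [exact Hlt | apply Rmin_r]).
  assert (H3 : Rabs (c + e * h) <= K).
  { unfold K. eapply Rle_trans; [apply Rabs_triang|]. rewrite Rabs_mult.
    pose proof (Rabs_pos e). pose proof (Rabs_pos h). nra. }
  rewrite Rabs_mult.
  assert (H5 : Rabs h * K < eps / K * K) by (apply Rmult_lt_compat_r; auto).
  replace (eps / K * K) with eps in H5 by (field; lra).
  pose proof (Rabs_pos h). nra.
Qed.

Lemma coord_open_pos (P : vec -> R) :
  (forall y i, (i < 3)%nat -> exists l, derivable_pt_lim (fun s => P (upd y i s)) (y i) l) ->
  coord_open (fun z => P z > 0).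
Proof.
  intros Hd y i Hi Hy.
  destruct (Hd y i Hi) as [l Hl].
  assert (Hc : continuity_pt (fun s => P (upd y i s)) (y i))
    by (apply derivable_continuous_pt; exists l; exact Hl).
  destruct (Hc (P y) Hy) as [alp [Halp Hal]].
  exists alp. split; auto. intros s Hs.
  destruct (Req_dec s (y i)) as [E|E].
  - subst. rewrite upd_same. auto.
  - assert (Hd' : D_x no_cond (y i) s /\ dist R_met s (y i) < alp)
      by (repeat split; auto).
    specialize (Hal s Hd'). simpl in Hal. unfold R_dist in Hal.
    rewrite upd_same in Hal. apply Rabs_def2 in Hal. lra.
Qed.

Lemma coord_open_and (U V : vec -> Prop) :
  coord_open U -> coord_open V -> coord_open (fun z => U z /\ V z).
Proof.
  intros HU HV y i Hi [Hu Hv].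
  destruct (HU y i Hi Hu) as [d1 [H1 H1']]. destruct (HV y i Hi Hv) as [d2 [H2 H2']].
  exists (Rmin d1 d2). split; [apply Rmin_pos; auto|].
  pose proof (Rmin_l d1 d2). pose proof (Rmin_r d1 d2).
  intros s Hs. split; [apply H1' | apply H2']; lra.
Qed.

(** ** Algebra of 3x3 matrices *)

Lemma sum3_ext (F G : nat -> R) :
  (forall i, (i < 3)%nat -> F i = G i) -> sum3 F = sum3 G.
Proof. intro H. unfold sum3. rewrite !H by lia. reflexivity. Qed.

(** Matrices are functions on [nat]; only the entries with indices below 3
    matter. *)
Definition agree3 (M N : mat) : Prop :=
  forall p q, (p < 3)%nat -> (q < 3)%nat -> M p q = N p q.

Ltac rewrite_agree H := repeat (rewrite H by lia).

Lemma det3_ext M N : agree3 M N -> det3 M = det3 N.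
Proof. intro H. unfold det3, sum3, cof3; simpl. rewrite_agree H. reflexivity. Qed.

Lemma adj3_ext M N : agree3 M N -> agree3 (adj3 M) (adj3 N).
Proof.
  intros H p q Hp Hq. unfold adj3, cof3.
  destruct p as [|[|[|p]]]; try lia; destruct q as [|[|[|q]]]; try lia; simpl;
    rewrite_agree H; reflexivity.
Qed.

Lemma tr3_ext M N : agree3 M N -> tr3 M = tr3 N.
Proof. intro H. unfold tr3, sum3; simpl. rewrite_agree H. reflexivity. Qed.

Lemma mul3_ext M M' N N' : agree3 M M' -> agree3 N N' -> agree3 (mul3 M N) (mul3 M' N').
Proof. intros H1 H2 p q Hp Hq. unfold mul3, sum3. rewrite_agree H1. rewrite_agree H2. reflexivity. Qed.

Definition symm (A : mat) : Prop :=
  A 1%nat 0%nat = A 0%nat 1%nat /\ A 2%nat 0%nat = A 0%nat 2%nat /\ A 2%nat 1%nat = A 1%nat 2%nat.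

Definition madd (X Y : mat) : mat := fun a b => X a b + Y a b.
Definition mscale (t : R) (Y : mat) : mat := fun a b => t * Y a b.
Definition qform (M : mat) (v : vec) : R := sum3 (fun i => sum3 (fun j => M i j * v i * v j)).
Definition mv (M : mat) (w : vec) : vec := fun k => sum3 (fun l => M k l * w l).
Definition dot (a b : vec) : R := sum3 (fun k => a k * b k).
Definition cross (a b : vec) : vec := fun k =>
  match k with
  | 0%nat => a 1%nat * b 2%nat - a 2%nat * b 1%nat
  | 1%nat => a 2%nat * b 0%nat - a 0%nat * b 2%nat
  | _ => a 0%nat * b 1%nat - a 1%nat * b 0%nat
  end.
Definition mkv (a b c : R) : vec :=
  fun k => match k with 0%nat => a | 1%nat => b | _ => c end.

(** The mixed adjugate: the polarisation of the quadratic map [adj3]. *)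
Definition mixadj (X Y : mat) : mat :=
  fun p q => adj3 (madd X Y) p q - adj3 X p q - adj3 Y p q.

Lemma det3_pencil X Y t :
  det3 (madd X (mscale t Y)) = det3 X + tr3 (mul3 (adj3 X) Y) * t
     + tr3 (mul3 X (adj3 Y)) * t^2 + det3 Y * t^3.
Proof. unfold det3, tr3, mul3, adj3, cof3, madd, mscale, sum3; simpl. ring. Qed.

Lemma tr_adj_pencil X Y Z t :
  tr3 (mul3 (adj3 (madd X (mscale t Y))) Z) = tr3 (mul3 (adj3 X) Z)
     + tr3 (mul3 (mixadj X Y) Z) * t + tr3 (mul3 (adj3 Y) Z) * t^2 + 0 * t^3.
Proof. unfold tr3, mul3, mixadj, adj3, cof3, madd, mscale, sum3; simpl. ring. Qed.

Lemma mixadj_diag_tr X E : tr3 (mul3 (mixadj X E) E) = 2 * tr3 (mul3 X (adj3 E)).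
Proof. unfold tr3, mul3, mixadj, adj3, cof3, madd, sum3; simpl. ring. Qed.

Definition lincomb (w : vec) (C : nat -> mat) : mat :=
  fun k l => sum3 (fun p => w p * C p k l).

Lemma lincomb_mixadj_tr X (C : nat -> mat) w :
  sum3 (fun p => sum3 (fun q => w p * w q * tr3 (mul3 (mixadj X (C p)) (C q))))
  = tr3 (mul3 (mixadj X (lincomb w C)) (lincomb w C)).
Proof. unfold lincomb, tr3, mul3, mixadj, adj3, cof3, madd, sum3; simpl. ring. Qed.

Lemma det3_scale c M : det3 (mscale c M) = c^3 * det3 M.
Proof. unfold det3, cof3, mscale, sum3; simpl; ring. Qed.

Lemma adj3_scale c M i j : adj3 (mscale c M) i j = c^2 * adj3 M i j.
Proof. unfold adj3, cof3, mscale; ring. Qed.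

Lemma symm_adj M : symm M -> symm (adj3 M).
Proof. intros [h1 [h2 h3]]. unfold symm, adj3, cof3; simpl. rewrite h1, h2, h3. repeat split; ring. Qed.

Lemma sum_adj_entries M : symm M ->
  sum3 (fun i => sum3 (fun j => adj3 M i j * M i j)) = 3 * det3 M.
Proof. intros [h1 [h2 h3]]. unfold adj3, det3, cof3, sum3; simpl. rewrite h1, h2, h3. ring. Qed.

Lemma dot_self_nonneg v : dot v v >= 0.
Proof. unfold dot, sum3. pose proof (Rle_0_sqr (v 0%nat)). pose proof (Rle_0_sqr (v 1%nat)).
  pose proof (Rle_0_sqr (v 2%nat)). unfold Rsqr in *. lra. Qed.

Lemma dot_self_pos v : nonzero3 v -> dot v v > 0.
Proof. intro Hv. unfold dot, sum3.
  pose proof (Rle_0_sqr (v 0%nat)). pose proof (Rle_0_sqr (v 1%nat)). pose proof (Rle_0_sqr (v 2%nat)).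
  unfold Rsqr in *. destruct Hv as [Hc|[Hc|Hc]]; pose proof (Rsqr_pos_lt _ Hc); unfold Rsqr in *; lra. Qed.

Lemma not_nonzero3 v : ~ nonzero3 v -> forall k, (k < 3)%nat -> v k = 0.
Proof. intros Hv k Hk. unfold nonzero3 in Hv.
  destruct k as [|[|[|k]]]; try lia; apply NNPP; tauto. Qed.

(** A positive definite matrix has positive determinant (via the leading
    minors [M00 > 0], [M00 M11 - M01^2 > 0]). *)
Lemma posdef_det_pos M : symm M -> (forall v, nonzero3 v -> qform M v > 0) -> det3 M > 0.
Proof.
  intros [h1 [h2 h3]] HP.
  assert (H0 : M 0%nat 0%nat > 0).
  { assert (Hv : qform M (mkv 1 0 0) > 0) by (apply HP; left; simpl; lra).
    unfold qform, sum3, mkv in Hv; simpl in Hv. lra. }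
  set (m2 := M 0%nat 0%nat * M 1%nat 1%nat - M 0%nat 1%nat * M 0%nat 1%nat).
  assert (Hm2 : m2 > 0).
  { assert (Hv : qform M (mkv (- M 0%nat 1%nat) (M 0%nat 0%nat) 0) > 0)
      by (apply HP; right; left; simpl; lra).
    unfold qform, sum3, mkv in Hv; simpl in Hv. rewrite h1 in Hv.
    assert (M 0%nat 0%nat * m2 > 0) by (unfold m2; nra). nra. }
  set (v := mkv (adj3 M 0 2) (adj3 M 1 2) (adj3 M 2 2)).
  assert (Hv : qform M v > 0).
  { apply HP. right; right. unfold v, mkv, adj3, cof3; simpl. rewrite h1. fold m2. lra. }
  assert (E : qform M v = det3 M * m2).
  { unfold v, m2, qform, mkv, adj3, det3, cof3, sum3; simpl. rewrite h1, h2, h3. ring. }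
  nra.
Qed.

(** The adjugate of a positive definite matrix is positive semidefinite:
    [qform M (adj M x) = det M * qform (adj M) x]. *)
Lemma posdef_adj_psd M : symm M -> (forall v, nonzero3 v -> qform M v > 0) ->
  forall x, qform (adj3 M) x >= 0.
Proof.
  intros Hs HP x.
  pose proof (posdef_det_pos M Hs HP) as Hdet.
  destruct Hs as [h1 [h2 h3]].
  set (v := mv (adj3 M) x).
  assert (Id : qform M v = det3 M * qform (adj3 M) x).
  { unfold v, mv, qform, adj3, det3, cof3, sum3; simpl. rewrite h1, h2, h3. ring. }
  destruct (classic (nonzero3 v)) as [Hv|Hv].
  - specialize (HP v Hv). nra.
  - assert (Id2 : qform (adj3 M) x = dot x v).
    { unfold v, mv, qform, dot, adj3, cof3, sum3; simpl. rewrite h1, h2, h3. ring. }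
    rewrite Id2. unfold dot, sum3. rewrite !(not_nonzero3 v Hv) by lia. lra.
Qed.

Lemma nsd_zero_diag (N : mat) : symm N -> (forall x, qform N x <= 0) ->
  (forall m, (m < 3)%nat -> N m m >= 0) -> agree3 N (fun _ _ => 0).
Proof.
  intros [h1 [h2 h3]] Hq Hd.
  pose proof (Hd 0%nat ltac:(lia)). pose proof (Hd 1%nat ltac:(lia)). pose proof (Hd 2%nat ltac:(lia)).
  pose proof (Hq (mkv 1 0 0)). pose proof (Hq (mkv 0 1 0)). pose proof (Hq (mkv 0 0 1)).
  pose proof (Hq (mkv 1 1 0)). pose proof (Hq (mkv 1 (-1) 0)).
  pose proof (Hq (mkv 1 0 1)). pose proof (Hq (mkv 1 0 (-1))).
  pose proof (Hq (mkv 0 1 1)). pose proof (Hq (mkv 0 1 (-1))).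
  unfold qform, mkv, sum3 in *; simpl in *. rewrite h1, h2, h3 in *.
  intros p q Hp Hq'.
  destruct p as [|[|[|p]]]; try lia; destruct q as [|[|[|q]]]; try lia; rewrite ?h1, ?h2, ?h3; lra.
Qed.

(** The cofactors of [adj M] are [det M] times the entries of [M]^T; hence
    for a singular symmetric [M], [adj M] has rank at most one:
    [adj(M)_pq adj(M)_mm = adj(M)_pm adj(M)_qm]. *)
Lemma cof_adj M i j : (i < 3)%nat -> (j < 3)%nat -> cof3 (adj3 M) i j = det3 M * M j i.
Proof. intros Hi Hj. unfold adj3, det3, cof3, sum3.
  destruct i as [|[|[|i]]]; try lia; destruct j as [|[|[|j]]]; try lia; simpl; ring. Qed.

Lemma rank_one_of_cof (N : mat) : symm N ->
  (forall i j, (i < 3)%nat -> (j < 3)%nat -> cof3 N i j = 0) ->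
  forall p q m, (p < 3)%nat -> (q < 3)%nat -> (m < 3)%nat -> N p q * N m m = N p m * N q m.
Proof.
  intros [h1 [h2 h3]] H p q m Hp Hq Hm.
  pose proof (H 0%nat 0%nat ltac:(lia) ltac:(lia)). pose proof (H 0%nat 1%nat ltac:(lia) ltac:(lia)).
  pose proof (H 0%nat 2%nat ltac:(lia) ltac:(lia)). pose proof (H 1%nat 0%nat ltac:(lia) ltac:(lia)).
  pose proof (H 1%nat 1%nat ltac:(lia) ltac:(lia)). pose proof (H 1%nat 2%nat ltac:(lia) ltac:(lia)).
  pose proof (H 2%nat 0%nat ltac:(lia) ltac:(lia)). pose proof (H 2%nat 1%nat ltac:(lia) ltac:(lia)).
  pose proof (H 2%nat 2%nat ltac:(lia) ltac:(lia)).
  unfold cof3 in *; simpl in *. rewrite ?h1, ?h2, ?h3 in *.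
  destruct p as [|[|[|p]]]; try lia; destruct q as [|[|[|q]]]; try lia;
    destruct m as [|[|[|m]]]; try lia; rewrite ?h1, ?h2, ?h3; lra.
Qed.

Lemma adj_rank_one M : symm M -> det3 M = 0 ->
  forall p q m, (p < 3)%nat -> (q < 3)%nat -> (m < 3)%nat ->
  adj3 M p q * adj3 M m m = adj3 M p m * adj3 M q m.
Proof.
  intros Hs Hd. apply rank_one_of_cof; [apply symm_adj; auto|].
  intros i j Hi Hj. rewrite cof_adj, Hd by auto. ring.
Qed.

Lemma adj_col_kernel M m k : (m < 3)%nat -> (k < 3)%nat -> det3 M = 0 ->
  mv M (fun p => adj3 M p m) k = 0.
Proof.
  intros Hm Hk Hd.
  assert (E : mv M (fun p => adj3 M p m) k = if Nat.eqb k m then det3 M else 0).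
  { unfold mv, adj3, det3, cof3, sum3.
    destruct m as [|[|[|m]]]; try lia; destruct k as [|[|[|k]]]; try lia; simpl; ring. }
  rewrite E. destruct (Nat.eqb k m); auto.
Qed.

Lemma cross_identity_poly (x00 x01 x02 x11 x12 x22 y0 y1 y2 w0 w1 w2 : R) :
  (x00*w0+x01*w1+x02*w2)*y0+(x01*w0+x11*w1+x12*w2)*y1+(x02*w0+x12*w1+x22*w2)*y2 = 0 ->
  (x00*w0+x01*w1+x02*w2)*w0+(x01*w0+x11*w1+x12*w2)*w1+(x02*w0+x12*w1+x22*w2)*w2 = 0 ->
  (x00*(x11*x22-x12*x12)-x01*(x01*x22-x12*x02)+x02*(x01*x12-x11*x02))
    *((y1*w2-y2*w1)*(y1*w2-y2*w1)+(y2*w0-y0*w2)*(y2*w0-y0*w2)+(y0*w1-y1*w0)*(y0*w1-y1*w0))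
  = - (x00*y0*y0+x11*y1*y1+x22*y2*y2+2*(x01*y0*y1+x02*y0*y2+x12*y1*y2))
    *((x00*w0+x01*w1+x02*w2)*(x00*w0+x01*w1+x02*w2)+(x01*w0+x11*w1+x12*w2)*(x01*w0+x11*w1+x12*w2)
      +(x02*w0+x12*w1+x22*w2)*(x02*w0+x12*w1+x22*w2)).
Proof. intros H1 H2. nsatz. Qed.

Lemma cross_identity X y w : symm X -> dot (mv X w) y = 0 -> dot (mv X w) w = 0 ->
  det3 X * dot (cross y w) (cross y w) = - qform X y * dot (mv X w) (mv X w).
Proof.
  intros [h1 [h2 h3]] H1 H2.
  unfold dot, mv, qform, cross, det3, cof3, sum3 in *; simpl in *. rewrite h1, h2, h3 in *.
  pose proof (cross_identity_poly (X 0%nat 0%nat) (X 0%nat 1%nat) (X 0%nat 2%nat)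
    (X 1%nat 1%nat) (X 1%nat 2%nat) (X 2%nat 2%nat) (y 0%nat) (y 1%nat) (y 2%nat)
    (w 0%nat) (w 1%nat) (w 2%nat) ltac:(lra) ltac:(lra)).
  lra.
Qed.

Lemma mv_pencil A E s w k : mv (madd A (mscale s E)) w k = mv A w k + s * mv E w k.
Proof. unfold mv, madd, mscale, sum3; ring. Qed.

Lemma qform_pencil A E s y : qform (madd A (mscale s E)) y = qform A y + s * qform E y.
Proof. unfold qform, madd, mscale, sum3; ring. Qed.

Lemma qform_dot M y : qform M y = dot (mv M y) y.
Proof. unfold qform, dot, mv, sum3; ring. Qed.

Lemma dot_zero_l a b : (forall k, (k < 3)%nat -> a k = 0) -> dot a b = 0.
Proof. intro H. unfold dot, sum3. rewrite !H by lia. ring. Qed.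

Lemma dot_comm a b : dot a b = dot b a.
Proof. unfold dot, sum3; ring. Qed.

Lemma dot_mv_symm E v w : symm E -> dot (mv E w) v = dot (mv E v) w.
Proof. intros [h1 [h2 h3]]. unfold dot, mv, sum3. rewrite h1, h2, h3. ring. Qed.

Lemma symm_pencil A E s : symm A -> symm E -> symm (madd A (mscale s E)).
Proof. intros [a1 [a2 a3]] [e1 [e2 e3]]. unfold symm, madd, mscale. rewrite a1, a2, a3, e1, e2, e3. auto. Qed.

(** Polarising [cross_identity] along the pencil [A + s E] (with [A w = 0],
    [E y = 0] and [w^T E w = 0]) isolates the quadratic coefficient:
    [tr(A adj E) |y x w|^2 = - (y^T A y) |E w|^2]. *)
Lemma cross_identity_pencil A E y w : symm A -> symm E ->
  (forall k, (k < 3)%nat -> mv A w k = 0) -> (forall k, (k < 3)%nat -> mv E y k = 0) ->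
  dot (mv E w) w = 0 ->
  tr3 (mul3 A (adj3 E)) * dot (cross y w) (cross y w) = - qform A y * dot (mv E w) (mv E w).
Proof.
  intros hA hE HAw HEy HEww.
  assert (Hmv : forall s k, (k < 3)%nat -> mv (madd A (mscale s E)) w k = s * mv E w k)
    by (intros s k Hk; rewrite mv_pencil, HAw by auto; ring).
  assert (Hline : forall s,
    (det3 A + tr3 (mul3 (adj3 A) E) * s + tr3 (mul3 A (adj3 E)) * s ^ 2 + det3 E * s ^ 3)
      * dot (cross y w) (cross y w) = - qform A y * (s ^ 2 * dot (mv E w) (mv E w))).
  { intro s. rewrite <- det3_pencil, cross_identity.
    - rewrite qform_pencil, (qform_dot E y), (dot_zero_l (mv E y)) by auto.
      replace (dot (mv (madd A (mscale s E)) w) (mv (madd A (mscale s E)) w))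
        with (s ^ 2 * dot (mv E w) (mv E w)) by (unfold dot, sum3; rewrite !Hmv by lia; ring).
      ring.
    - apply symm_pencil; auto.
    - transitivity (s * dot (mv E w) y); [unfold dot, sum3; rewrite !Hmv by lia; ring|].
      rewrite dot_mv_symm, dot_zero_l by auto. ring.
    - transitivity (s * dot (mv E w) w); [unfold dot, sum3; rewrite !Hmv by lia; ring|].
      rewrite HEww. ring. }
  pose proof (Hline 1) as P1. pose proof (Hline (-1)) as P2. pose proof (Hline 0) as P3. lra.
Qed.

Lemma cross_pos A y w m : symm A -> (m < 3)%nat -> w m <> 0 -> qform A y > 0 ->
  (forall k, (k < 3)%nat -> mv A w k = 0) -> dot (cross y w) (cross y w) > 0.
Proof.
  intros [h1 [h2 h3]] Hm Hw Hq HAw.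
  apply dot_self_pos. apply NNPP. intro Hc.
  pose proof (not_nonzero3 _ Hc) as Hc'.
  pose proof (Hc' 0%nat ltac:(lia)) as c0. pose proof (Hc' 1%nat ltac:(lia)) as c1.
  pose proof (Hc' 2%nat ltac:(lia)) as c2.
  pose proof (HAw 0%nat ltac:(lia)) as a0. pose proof (HAw 1%nat ltac:(lia)) as a1.
  pose proof (HAw 2%nat ltac:(lia)) as a2.
  unfold cross in c0, c1, c2; simpl in c0, c1, c2. unfold mv, sum3 in a0, a1, a2.
  unfold qform, sum3 in Hq. rewrite h1, h2, h3 in *.
  assert (E : w m * qform A y = 0).
  { unfold qform, sum3. rewrite h1, h2, h3.
    destruct m as [|[|[|m]]]; try lia; nsatz. }
  apply Rmult_integral in E. destruct E as [E|E]; [auto|].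
  unfold qform, sum3 in E. rewrite h1, h2, h3 in E. lra.
Qed.

(** ** The cubic form, its derivatives and its Hessian determinant *)

Section Cubic.
Variable d : nat -> nat -> nat -> R.

(** [sym3 p q r] is the third partial derivative [f_pqr]; [hess y] is the
    Hessian matrix [A(y)] (linear in [y]), [third p] the matrix [d A / d y_p],
    and [grad y = A(y) y / 2] the gradient (Euler's identity). *)
Definition sym3 (p q r : nat) : R :=
  d p q r + d p r q + d q p r + d q r p + d r p q + d r q p.
Definition hess (y : vec) : mat := fun i j => sum3 (fun r => sym3 i j r * y r).
Definition third (p : nat) : mat := fun i j => sym3 p i j.
Definition grad (y : vec) : vec := fun i => / 2 * sum3 (fun j => hess y i j * y j).

(** [H = det A], its gradient [H_i = tr(adj A . A_i)] and second derivatives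
    [H_ij] (through the mixed adjugate). *)
Definition Hdet (y : vec) : R := det3 (hess y).
Definition dHdet (i : nat) (y : vec) : R := tr3 (mul3 (adj3 (hess y)) (third i)).
Definition ddHdet (i j : nat) (y : vec) : R :=
  tr3 (mul3 (mixadj (hess y) (third i)) (third j)).

Lemma hess_symm y : symm (hess y).
Proof. unfold symm, hess, sym3, sum3. repeat split; ring. Qed.

Lemma cubic_euler y : cubic d y = qform (hess y) y / 6.
Proof. unfold cubic, qform, hess, sym3, sum3. field. Qed.

Lemma cubic_line y i s : (i < 3)%nat ->
  cubic d (upd y i s) = cubic d y + grad y i * (s - y i) + (hess y i i / 2) * (s - y i)^2
     + (sym3 i i i / 6) * (s - y i)^3.
Proof.
  intro Hi. unfold cubic, grad, hess, sym3.
  destruct i as [|[|[|i]]]; try lia; unfold sum3, upd; simpl; field.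
Qed.

Lemma grad_line j y i s : (i < 3)%nat ->
  grad (upd y i s) j = grad y j + hess y i j * (s - y i) + (sym3 i i j / 2) * (s - y i)^2
     + 0 * (s - y i)^3.
Proof.
  intro Hi. unfold grad, hess, sym3.
  destruct i as [|[|[|i]]]; try lia; unfold sum3, upd; simpl; field.
Qed.

Lemma hess_line y i s : (i < 3)%nat ->
  agree3 (hess (upd y i s)) (madd (hess y) (mscale (s - y i) (third i))).
Proof.
  intros Hi p q _ _. unfold hess, third, madd, mscale, sym3.
  destruct i as [|[|[|i]]]; try lia; unfold sum3, upd; simpl; ring.
Qed.

Lemma Hdet_line y i s : (i < 3)%nat ->
  Hdet (upd y i s) = Hdet y + dHdet i y * (s - y i)
     + tr3 (mul3 (hess y) (adj3 (third i))) * (s - y i)^2 + det3 (third i) * (s - y i)^3.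
Proof. intro Hi. unfold Hdet, dHdet. rewrite (det3_ext _ _ (hess_line y i s Hi)), det3_pencil. ring. Qed.

Lemma dHdet_line j y i s : (i < 3)%nat ->
  dHdet j (upd y i s) = dHdet j y + ddHdet i j y * (s - y i)
     + tr3 (mul3 (adj3 (third i)) (third j)) * (s - y i)^2 + 0 * (s - y i)^3.
Proof.
  intro Hi. unfold dHdet, ddHdet.
  rewrite (tr3_ext _ _ (mul3_ext _ _ _ _ (adj3_ext _ _ (hess_line y i s Hi))
             (fun p q _ _ => eq_refl))), tr_adj_pencil.
  ring.
Qed.

Lemma cubic_derivable y i : (i < 3)%nat ->
  derivable_pt_lim (fun s => cubic d (upd y i s)) (y i) (grad y i).
Proof. intro Hi. eapply derivable_cubic_poly. intro s. apply cubic_line; auto. Qed.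

Lemma grad_derivable j y i : (i < 3)%nat ->
  derivable_pt_lim (fun s => grad (upd y i s) j) (y i) (hess y i j).
Proof. intro Hi. eapply derivable_cubic_poly. intro s. apply grad_line; auto. Qed.

Lemma Hdet_derivable y i : (i < 3)%nat ->
  derivable_pt_lim (fun s => Hdet (upd y i s)) (y i) (dHdet i y).
Proof. intro Hi. eapply derivable_cubic_poly. intro s. apply Hdet_line; auto. Qed.

Lemma dHdet_derivable j y i : (i < 3)%nat ->
  derivable_pt_lim (fun s => dHdet j (upd y i s)) (y i) (ddHdet i j y).
Proof. intro Hi. eapply derivable_cubic_poly. intro s. apply dHdet_line; auto. Qed.

Lemma pd_cubic i : (i < 3)%nat -> pd i (cubic d) = fun y => grad y i.
Proof. intro Hi. apply functional_extensionality; intro y. apply pd_unique, cubic_derivable; auto. Qed.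

Lemma pd_grad i j : (i < 3)%nat -> pd i (fun y => grad y j) = fun y => hess y i j.
Proof. intro Hi. apply functional_extensionality; intro y. apply pd_unique, grad_derivable; auto. Qed.

Lemma hess_swap v w k : mv (hess v) w k = mv (hess w) v k.
Proof. unfold mv, hess, sym3, sum3. ring. Qed.

Lemma dot_hess v w y : dot (mv (hess v) w) y = dot v (mv (hess y) w).
Proof. unfold dot, mv, hess, sym3, sum3. ring. Qed.

Lemma hess_lincomb w : hess w = lincomb w third.
Proof.
  do 2 (apply functional_extensionality; intro).
  unfold hess, lincomb, third, sym3, sum3. ring.
Qed.

End Cubic.

(** For symmetric [A], put [a = A y / 2] and [e = y^T A y / 6] (so that
    [a = grad f], [e = f] when [A] is the Hessian of [f] at [y]). *)
Definition euler_G (A : mat) (y : vec) : mat := fun i j =>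
  (/ 2 * sum3 (fun k => A i k * y k)) * (/ 2 * sum3 (fun k => A j k * y k))
  - qform A y / 6 * A i j.

Lemma euler_G_det A y : symm A -> det3 (euler_G A y) = (qform A y / 6) ^ 3 * det3 A / 2.
Proof. intros [h1 [h2 h3]]. unfold euler_G, qform, det3, cof3, sum3; simpl. rewrite h1, h2, h3. field. Qed.

Lemma euler_G_adj A y i j : symm A -> (i < 3)%nat -> (j < 3)%nat ->
  adj3 (euler_G A y) i j
  = qform A y / 6 * (det3 A * y i * y j / 4 - qform A y / 6 / 2 * adj3 A i j).
Proof.
  intros [h1 [h2 h3]] Hi Hj. unfold euler_G, qform, det3, adj3, cof3, sum3.
  destruct i as [|[|[|i]]]; try lia; destruct j as [|[|[|j]]]; try lia; simpl;
    rewrite ?h1, ?h2, ?h3; field.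
Qed.

Section Metric.
Variable d : nat -> nat -> nat -> R.

Definition Gm (y : vec) : mat :=
  fun i j => grad d y i * grad d y j - cubic d y * hess d y i j.
Definition Bm (y : vec) : mat := adj3 (Gm y).

Lemma Gm_euler y : Gm y = euler_G (hess d y) y.
Proof. unfold Gm, euler_G, grad. rewrite cubic_euler. reflexivity. Qed.

Lemma Gm_symm y : symm (Gm y).
Proof. rewrite Gm_euler. pose proof (hess_symm d y) as [h1 [h2 h3]].
  unfold symm, euler_G, sum3. rewrite h1, h2, h3. repeat split; ring. Qed.

Lemma Gm_det y : det3 (Gm y) = cubic d y ^ 3 * Hdet d y / 2.
Proof. rewrite Gm_euler, euler_G_det, cubic_euler by apply hess_symm. reflexivity. Qed.

Lemma Bm_eq y i j : (i < 3)%nat -> (j < 3)%nat ->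
  Bm y i j = cubic d y * (Hdet d y * y i * y j / 4 - cubic d y / 2 * adj3 (hess d y) i j).
Proof. intros. unfold Bm. rewrite Gm_euler, euler_G_adj, cubic_euler by (auto; apply hess_symm).
  reflexivity. Qed.

(** ** The AMWP metric and its scalar curvature *)

Definition pos_f : vec -> Prop := fun z => cubic d z > 0.
Definition pos_fH : vec -> Prop := fun z => cubic d z > 0 /\ Hdet d z > 0.

Lemma pos_f_open : coord_open pos_f.
Proof. apply coord_open_pos. intros y i Hi. eexists. apply cubic_derivable; auto. Qed.

Lemma pos_fH_open : coord_open pos_fH.
Proof.
  apply coord_open_and; [apply pos_f_open|].
  apply coord_open_pos. intros y i Hi. eexists. apply Hdet_derivable; auto.
Qed.

Lemma pd_potential z j : (j < 3)%nat -> cubic d z > 0 ->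
  pd j (potential (cubic d)) z = - (grad d z j / cubic d z).
Proof.
  intros Hj Hz. apply pd_unique. unfold potential.
  replace (- (grad d z j / cubic d z)) with (- (/ cubic d (upd z j (z j)) * grad d z j))
    by (rewrite upd_same; field; lra).
  apply derivable_pt_lim_opp.
  apply (derivable_pt_lim_comp (fun s => cubic d (upd z j s)) ln);
    [apply cubic_derivable; auto | apply derivable_pt_lim_ln; rewrite upd_same; auto].
Qed.

Lemma gmet_eq z i j : (i < 3)%nat -> (j < 3)%nat -> cubic d z > 0 ->
  gmet (cubic d) z i j = / (4 * cubic d z ^ 2) * Gm z i j.
Proof.
  intros Hi Hj Hz. unfold gmet.
  rewrite (pd_local pos_f _ (fun z => - (grad d z j / cubic d z)) i z
             (Gm z i j / cubic d z ^ 2)); auto.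
  - field. lra.
  - apply pos_f_open.
  - intros w Hw. apply pd_potential; auto.
  - replace (Gm z i j / cubic d z ^ 2) with
      (- ((hess d z i j * cubic d (upd z i (z i)) - grad d z i * grad d (upd z i (z i)) j)
          / Rsqr (cubic d (upd z i (z i)))))
      by (rewrite upd_same; unfold Gm, Rsqr; field; lra).
    apply derivable_pt_lim_opp, derivable_pt_lim_div;
      [apply grad_derivable | apply cubic_derivable | rewrite upd_same; lra]; auto.
Qed.

Lemma gmet_agree z : cubic d z > 0 ->
  agree3 (gmet (cubic d) z) (mscale (/ (4 * cubic d z ^ 2)) (Gm z)).
Proof. intros Hz p q Hp Hq. apply gmet_eq; auto. Qed.

Lemma gmet_det z : cubic d z > 0 -> det3 (gmet (cubic d) z) = Hdet d z / (128 * cubic d z ^ 3).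
Proof.
  intro Hz. rewrite (det3_ext _ _ (gmet_agree z Hz)), det3_scale, Gm_det.
  field. lra.
Qed.

Definition dlogdet (j : nat) (z : vec) : R :=
  dHdet d j z / Hdet d z - 3 * (grad d z j / cubic d z).

Lemma pd_logdetg z j : (j < 3)%nat -> pos_fH z -> pd j (logdetg (cubic d)) z = dlogdet j z.
Proof.
  intros Hj [Hf Hh].
  apply (pd_local pos_f _ (fun z => ln (Hdet d z / (128 * cubic d z ^ 3)))); auto.
  - apply pos_f_open.
  - intros w Hw. unfold logdetg. rewrite gmet_det; auto.
  - set (u := fun s => Hdet d (upd z j s)). set (v := fun s => 128 * cubic d (upd z j s) ^ 3).
    assert (Hu : derivable_pt_lim u (z j) (dHdet d j z)) by (apply Hdet_derivable; auto).
    assert (Hv : derivable_pt_lim v (z j) (128 * (INR 3 * cubic d z ^ 2 * grad d z j))).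
    { unfold v. apply derivable_pt_lim_scal.
      rewrite <- (upd_same z j) at 2.
      apply (derivable_pt_lim_comp (fun s => cubic d (upd z j s)) (fun x => x ^ 3));
        [apply cubic_derivable; auto | apply derivable_pt_lim_pow]. }
    assert (Hv0 : v (z j) = 128 * cubic d z ^ 3) by (unfold v; rewrite upd_same; auto).
    assert (Hu0 : u (z j) = Hdet d z) by (unfold u; rewrite upd_same; auto).
    assert (Hpos : 0 < 128 * cubic d z ^ 3) by (apply Rmult_lt_0_compat; [lra | apply pow_lt; auto]).
    replace (dlogdet j z) with
      (/ (u (z j) / v (z j)) *
       ((dHdet d j z * v (z j) - 128 * (INR 3 * cubic d z ^ 2 * grad d z j) * u (z j))
         / Rsqr (v (z j))))
      by (rewrite Hv0, Hu0; unfold dlogdet, Rsqr; simpl; field; lra).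
    apply (derivable_pt_lim_comp (fun s => u s / v s) ln);
      [apply derivable_pt_lim_div; auto; lra
      | apply derivable_pt_lim_ln; rewrite Hv0, Hu0; apply Rdiv_lt_0_compat; auto].
Qed.

Lemma pd2_logdetg y i j : (i < 3)%nat -> (j < 3)%nat -> pos_fH y ->
  pd i (pd j (logdetg (cubic d))) y =
  (ddHdet d i j y * Hdet d y - dHdet d i y * dHdet d j y) / Hdet d y ^ 2
  + 3 * (Gm y i j / cubic d y ^ 2).
Proof.
  intros Hi Hj [Hf Hh].
  apply (pd_local pos_fH _ (dlogdet j)); auto.
  - apply pos_fH_open.
  - split; auto.
  - intros w Hw. apply pd_logdetg; auto.
  - unfold dlogdet.
    replace ((ddHdet d i j y * Hdet d y - dHdet d i y * dHdet d j y) / Hdet d y ^ 2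
             + 3 * (Gm y i j / cubic d y ^ 2)) with
      ((ddHdet d i j y * Hdet d (upd y i (y i)) - dHdet d i y * dHdet d j (upd y i (y i)))
         / Rsqr (Hdet d (upd y i (y i)))
       - 3 * ((hess d y i j * cubic d (upd y i (y i)) - grad d y i * grad d (upd y i (y i)) j)
         / Rsqr (cubic d (upd y i (y i)))))
      by (rewrite !upd_same; unfold Gm, Rsqr; field; lra).
    apply derivable_pt_lim_minus; [|apply derivable_pt_lim_scal];
      apply derivable_pt_lim_div;
      try (apply dHdet_derivable || apply Hdet_derivable || apply grad_derivable
           || apply cubic_derivable); auto; rewrite upd_same; lra.
Qed.

End Metric.

Definition Qterm d (y : vec) : R :=
  sum3 (fun i => sum3 (fun j => Bm d y i j * dHdet d i y * dHdet d j y)).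
Definition Pterm d (y : vec) : R :=
  - sum3 (fun i => sum3 (fun j => Bm d y i j * ddHdet d i j y)).

Lemma scal_summand d y i j : (i < 3)%nat -> (j < 3)%nat -> pos_fH d y ->
  adj3 (gmet (cubic d) y) i j / det3 (gmet (cubic d) y)
    * (- / 4 * pd i (pd j (logdetg (cubic d))) y)
  = 2 / (cubic d y * Hdet d y ^ 3) * (Bm d y i j * dHdet d i y * dHdet d j y)
    - 2 / (cubic d y * Hdet d y ^ 2) * (Bm d y i j * ddHdet d i j y)
    - 6 / (cubic d y ^ 3 * Hdet d y) * (Bm d y i j * Gm d y i j).
Proof.
  intros Hi Hj Hy. pose proof Hy as [Hf Hh].
  rewrite (adj3_ext _ _ (gmet_agree d y Hf)), adj3_scale, gmet_det, pd2_logdetg by auto.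
  unfold Bm. field. split; lra.
Qed.

Lemma scal_formula d y : pos_fH d y ->
  scal (cubic d) y = -9 + 2 * (Qterm d y + Hdet d y * Pterm d y) / (cubic d y * Hdet d y ^ 3).
Proof.
  intros Hy. pose proof Hy as [Hf Hh]. unfold scal.
  rewrite (sum3_ext _ (fun i => sum3 (fun j =>
      2 / (cubic d y * Hdet d y ^ 3) * (Bm d y i j * dHdet d i y * dHdet d j y)
    - 2 / (cubic d y * Hdet d y ^ 2) * (Bm d y i j * ddHdet d i j y)
    - 6 / (cubic d y ^ 3 * Hdet d y) * (Bm d y i j * Gm d y i j))))
    by (intros i Hi; apply sum3_ext; intros j Hj; apply scal_summand; auto).
  transitivity (2 / (cubic d y * Hdet d y ^ 3) * Qterm d y
    + 2 / (cubic d y * Hdet d y ^ 2) * Pterm d y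
    - 6 / (cubic d y ^ 3 * Hdet d y) * sum3 (fun i => sum3 (fun j => adj3 (Gm d y) i j * Gm d y i j))).
  { unfold Qterm, Pterm, Bm, sum3. ring. }
  rewrite sum_adj_entries, Gm_det by apply Gm_symm.
  field. split; lra.
Qed.

(** At a point of the cone, [G] is positive definite (Hodge index), so
    [f > 0], [H > 0] (since [det G = f^3 H / 2]) and [B = adj G] is positive
    semidefinite. *)
Lemma kahler_point_facts d K y : kahler_cone_like (cubic d) K -> K y ->
  cubic d y > 0 /\ Hdet d y > 0 /\ forall x, qform (Bm d y) x >= 0.
Proof.
  intros [_ [_ [_ [Hf Hg]]]] Hy.
  assert (Hfy : cubic d y > 0) by auto.
  assert (Hc : / (4 * cubic d y ^ 2) > 0)
    by (apply Rinv_0_lt_compat, Rmult_lt_0_compat; [lra | apply pow_lt; auto]).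
  assert (HG : forall v, nonzero3 v -> qform (Gm d y) v > 0).
  { intros v Hv. specialize (Hg y v Hy Hv).
    change (qform (gmet (cubic d) y) v > 0) in Hg.
    replace (qform (gmet (cubic d) y) v) with (/ (4 * cubic d y ^ 2) * qform (Gm d y) v) in Hg
      by (unfold qform, sum3; rewrite !gmet_eq by (auto; lia); ring).
    nra. }
  pose proof (posdef_det_pos _ (Gm_symm d y) HG) as Hdet.
  rewrite Gm_det in Hdet.
  assert (cubic d y ^ 3 > 0) by (apply pow_lt; auto).
  split; [auto | split; [nra | apply posdef_adj_psd; [apply Gm_symm | auto]]].
Qed.

Definition seg (y0 z : vec) (t : R) : vec := fun k => y0 k + t * (z k - y0 k).

Lemma seg_at0 y0 z : seg y0 z 0 = y0.
Proof. apply functional_extensionality; intro k. unfold seg. ring. Qed.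

Lemma seg_close y0 z t eps : 0 <= t <= 1 -> close z y0 eps -> close (seg y0 z t) y0 eps.
Proof.
  intros Ht Hz.
  assert (Hk : forall k, Rabs (z k - y0 k) < eps -> Rabs (seg y0 z t k - y0 k) < eps).
  { intros k Hk. unfold seg. replace (y0 k + t * (z k - y0 k) - y0 k) with (t * (z k - y0 k)) by ring.
    rewrite Rabs_mult, (Rabs_right t) by lra. pose proof (Rabs_pos (z k - y0 k)). nra. }
  destruct Hz as [h0 [h1 h2]]. repeat split; apply Hk; auto.
Qed.

Lemma seg_in_cone f K y0 z t : kahler_cone_like f K -> in_boundary K y0 -> K z ->
  0 < t <= 1 -> K (seg y0 z t).
Proof.
  intros [Hop [Hcv _]] [_ Hb] Hz Ht.
  destruct (Req_dec t 1) as [E|E].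
  { replace (seg y0 z t) with z; auto.
    apply functional_extensionality; intro k. unfold seg. subst. ring. }
  (* [seg y0 z t = t z' + (1 - t) k] with [k] in [K] near [y0] and [z'] near [z] *)
  destruct (Hop z Hz) as [e [He Hball]].
  set (c := (1 - t) / t).
  assert (Hc : c > 0) by (unfold c; apply Rdiv_lt_0_compat; lra).
  destruct (Hb (e / c)) as [k [Hk Hck]]; [apply Rdiv_lt_0_compat; lra|].
  set (z' := fun m => z m + c * (y0 m - k m)).
  assert (Hz' : K z').
  { apply Hball.
    assert (Hm : forall m, Rabs (k m - y0 m) < e / c -> Rabs (z' m - z m) < e).
    { intros m Hm. unfold z'. replace (z m + c * (y0 m - k m) - z m) with (- c * (k m - y0 m)) by ring.
      rewrite Rabs_mult, Rabs_Ropp, (Rabs_right c) by lra.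
      apply Rmult_lt_compat_l with (r := c) in Hm; auto.
      replace (c * (e / c)) with e in Hm by (field; lra). lra. }
    destruct Hck as [h0 [h1 h2]]. repeat split; apply Hm; auto. }
  replace (seg y0 z t) with (fun m => t * z' m + (1 - t) * k m).
  - apply Hcv; auto; lra.
  - apply functional_extensionality; intro m. unfold seg, z', c. field. lra.
Qed.

Definition seg_continuous (F : vec -> R) : Prop :=
  forall y0 z, continuity (fun t => F (seg y0 z t)).

Lemma seg_cont_const c : seg_continuous (fun _ => c).
Proof. intros y0 z. apply continuity_const. intros a b; reflexivity. Qed.

Lemma seg_cont_coord k : seg_continuous (fun y => y k).
Proof.
  intros y0 z. unfold seg.
  apply (continuity_plus (fun _ => y0 k) (fun t => t * (z k - y0 k))).
  - apply continuity_const; intros a b; reflexivity.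
  - apply (continuity_mult (fun t => t) (fun _ => z k - y0 k));
      [apply derivable_continuous, derivable_id | apply continuity_const; intros a b; reflexivity].
Qed.

Lemma seg_cont_plus F G : seg_continuous F -> seg_continuous G -> seg_continuous (fun y => F y + G y).
Proof. intros H1 H2 y0 z. apply (continuity_plus (fun t => F (seg y0 z t)) (fun t => G (seg y0 z t))); auto. Qed.

Lemma seg_cont_minus F G : seg_continuous F -> seg_continuous G -> seg_continuous (fun y => F y - G y).
Proof. intros H1 H2 y0 z. apply (continuity_minus (fun t => F (seg y0 z t)) (fun t => G (seg y0 z t))); auto. Qed.

Lemma seg_cont_mult F G : seg_continuous F -> seg_continuous G -> seg_continuous (fun y => F y * G y).
Proof. intros H1 H2 y0 z. apply (continuity_mult (fun t => F (seg y0 z t)) (fun t => G (seg y0 z t))); auto. Qed.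

Lemma seg_cont_opp F : seg_continuous F -> seg_continuous (fun y => - F y).
Proof. intros H y0 z. apply (continuity_opp (fun t => F (seg y0 z t))); auto. Qed.

Lemma seg_cont_sum3 (F : nat -> vec -> R) :
  (forall i, seg_continuous (F i)) -> seg_continuous (fun y => sum3 (fun i => F i y)).
Proof. intros H. unfold sum3. repeat apply seg_cont_plus; apply H. Qed.

Ltac seg_cont :=
  repeat match goal with
  | |- seg_continuous (fun y => sum3 _) => apply seg_cont_sum3; intro
  | |- seg_continuous (fun y => _ + _) => apply seg_cont_plus
  | |- seg_continuous (fun y => _ - _) => apply seg_cont_minus
  | |- seg_continuous (fun y => _ * _) => apply seg_cont_mult
  | |- seg_continuous (fun y => - _) => apply seg_cont_opp
  | |- seg_continuous (fun y => y _) => apply seg_cont_coord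
  | |- seg_continuous (fun y => _) => apply seg_cont_const
  end.

Definition mat_seg_continuous (M : vec -> mat) : Prop :=
  forall p q, seg_continuous (fun y => M y p q).

Lemma mat_seg_cont_const (N : mat) : mat_seg_continuous (fun _ => N).
Proof. intros p q. apply seg_cont_const. Qed.

Lemma mat_seg_cont_hess d : mat_seg_continuous (hess d).
Proof. intros p q. unfold hess. seg_cont. Qed.

Lemma mat_seg_cont_adj3 M : mat_seg_continuous M -> mat_seg_continuous (fun y => adj3 (M y)).
Proof. intros H p q. unfold adj3, cof3. apply seg_cont_minus; apply seg_cont_mult; apply H. Qed.

Lemma mat_seg_cont_mul3 M N : mat_seg_continuous M -> mat_seg_continuous N ->
  mat_seg_continuous (fun y => mul3 (M y) (N y)).
Proof. intros H1 H2 p q. unfold mul3. apply seg_cont_sum3. intro j. apply seg_cont_mult; auto. Qed.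

Lemma mat_seg_cont_mixadj M N : mat_seg_continuous M -> mat_seg_continuous N ->
  mat_seg_continuous (fun y => mixadj (M y) (N y)).
Proof.
  intros H1 H2 p q. unfold mixadj.
  apply seg_cont_minus; [apply seg_cont_minus|]; [| apply (mat_seg_cont_adj3 M)
    | apply (mat_seg_cont_adj3 N)]; auto.
  apply (mat_seg_cont_adj3 (fun y => madd (M y) (N y))).
  intros a b. apply seg_cont_plus; auto.
Qed.

Lemma seg_cont_det3 M : mat_seg_continuous M -> seg_continuous (fun y => det3 (M y)).
Proof.
  intro H. unfold det3. apply seg_cont_sum3; intro j.
  apply seg_cont_mult; [apply H | exact (mat_seg_cont_adj3 M H j 0%nat)].
Qed.

Lemma seg_cont_tr3 M : mat_seg_continuous M -> seg_continuous (fun y => tr3 (M y)).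
Proof. intro H. unfold tr3. apply seg_cont_sum3. intro i. apply H. Qed.

Lemma seg_cont_qform M x : mat_seg_continuous M -> seg_continuous (fun y => qform (M y) x).
Proof. intro H. unfold qform. seg_cont; apply H. Qed.

Lemma mat_seg_cont_Bm d : mat_seg_continuous (Bm d).
Proof.
  apply (mat_seg_cont_adj3 (Gm d)). intros p q. unfold Gm, grad.
  seg_cont; apply mat_seg_cont_hess || (unfold cubic; seg_cont).
Qed.

Lemma seg_cont_cubic d : seg_continuous (cubic d).
Proof. unfold cubic. seg_cont. Qed.

Lemma seg_cont_Hdet d : seg_continuous (Hdet d).
Proof. apply seg_cont_det3, mat_seg_cont_hess. Qed.

Lemma seg_cont_Qterm d : seg_continuous (Qterm d).
Proof.
  unfold Qterm, dHdet. seg_cont; try apply mat_seg_cont_Bm;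
    apply (seg_cont_tr3 (fun y => mul3 (adj3 (hess d y)) (third d _))),
      (mat_seg_cont_mul3 (fun y => adj3 (hess d y)) (fun _ => third d _)),
      mat_seg_cont_const; apply (mat_seg_cont_adj3 (hess d)), mat_seg_cont_hess.
Qed.

Lemma seg_cont_Pterm d : seg_continuous (Pterm d).
Proof.
  unfold Pterm, ddHdet. seg_cont; try apply mat_seg_cont_Bm.
  apply (seg_cont_tr3 (fun y => mul3 (mixadj (hess d y) (third d _)) (third d _))),
    (mat_seg_cont_mul3 (fun y => mixadj (hess d y) (third d _)) (fun _ => third d _)),
    mat_seg_cont_const.
  apply (mat_seg_cont_mixadj (hess d) (fun _ => third d _)); [apply mat_seg_cont_hess | apply mat_seg_cont_const].
Qed.

Lemma cont_at0_near (g : R -> R) eps : continuity_pt g 0 -> eps > 0 ->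
  exists a, a > 0 /\ forall t, 0 < t < a -> Rabs (g t - g 0) < eps.
Proof.
  intros Hc He. destruct (Hc eps He) as [a [Ha H]]. exists a. split; auto.
  intros t Ht. apply (H t). split; [split; [exact I | lra]|].
  simpl. unfold R_dist. rewrite Rminus_0_r, Rabs_right; lra.
Qed.

Lemma pick_small a : a > 0 -> exists t, 0 < t <= 1 /\ t < a.
Proof.
  intro Ha. exists (Rmin 1 (a / 2)).
  pose proof (Rmin_l 1 (a / 2)). pose proof (Rmin_r 1 (a / 2)).
  assert (Rmin 1 (a / 2) > 0) by (apply Rmin_pos; lra). repeat split; lra.
Qed.

Lemma lim_nonneg (g : R -> R) : continuity_pt g 0 ->
  (forall t, 0 < t <= 1 -> g t >= 0) -> g 0 >= 0.
Proof.
  intros Hc Hpos. apply Rnot_lt_ge. intro Hneg.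
  destruct (cont_at0_near g (- g 0) Hc ltac:(lra)) as [a [Ha Hat]].
  destruct (pick_small a Ha) as [t [Ht Hta]].
  specialize (Hat t ltac:(lra)). specialize (Hpos t Ht). apply Rabs_def2 in Hat. lra.
Qed.

Lemma ratio_unbounded (g h : R -> R) K :
  continuity_pt g 0 -> continuity_pt h 0 -> g 0 > 0 -> h 0 = 0 ->
  (forall t, 0 < t <= 1 -> h t > 0) ->
  exists t, 0 < t <= 1 /\ g t / h t > K.
Proof.
  intros Cg Ch Hg0 Hh0 Hpos.
  set (Kp := Rabs K + 1).
  assert (HKp : Kp > 0) by (unfold Kp; pose proof (Rabs_pos K); lra).
  assert (HKK : K < Kp) by (unfold Kp; pose proof (Rle_abs K); lra).
  destruct (cont_at0_near g (g 0 / 2) Cg ltac:(lra)) as [a1 [Ha1 H1]].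
  destruct (cont_at0_near h (g 0 / (2 * Kp)) Ch) as [a2 [Ha2 H2]];
    [apply Rdiv_lt_0_compat; lra|].
  destruct (pick_small (Rmin a1 a2)) as [t [Ht Hta]]; [apply Rmin_pos; auto|].
  pose proof (Rmin_l a1 a2). pose proof (Rmin_r a1 a2).
  specialize (H1 t ltac:(lra)). specialize (H2 t ltac:(lra)). specialize (Hpos t Ht).
  rewrite Hh0, Rminus_0_r, Rabs_right in H2 by lra. apply Rabs_def2 in H1.
  exists t. split; auto.
  assert (Hh : Kp * h t < g 0 / 2).
  { apply Rmult_lt_compat_l with (r := Kp) in H2; auto.
    replace (Kp * (g 0 / (2 * Kp))) with (g 0 / 2) in H2 by (field; lra). exact H2. }
  apply Rlt_gt, Rlt_trans with Kp; auto.
  apply Rmult_lt_reg_r with (h t); auto.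
  unfold Rdiv. rewrite Rmult_assoc, Rinv_l by lra. lra.
Qed.

Lemma curvature_expr_unbounded (fF hF qF pF : R -> R) M :
  continuity_pt fF 0 -> continuity_pt hF 0 -> continuity_pt qF 0 -> continuity_pt pF 0 ->
  fF 0 > 0 -> hF 0 = 0 ->
  (forall t, 0 < t <= 1 -> fF t > 0 /\ hF t > 0 /\ qF t >= 0) ->
  qF 0 > 0 \/ pF 0 > 0 ->
  exists t, 0 < t <= 1 /\ -9 + 2 * (qF t + hF t * pF t) / (fF t * hF t ^ 3) > M.
Proof.
  intros Cf Ch Cq Cp Hf0 Hh0 Hpos [Hq0|Hp0].
  - (* numerator [q + h p -> q(0) > 0], denominator [f h^3 -> 0] *)
    destruct (ratio_unbounded (fun t => qF t + hF t * pF t) (fun t => fF t * hF t ^ 3) ((M + 9) / 2))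
      as [t [Ht Hr]].
    + apply (continuity_pt_plus qF (fun t => hF t * pF t)); auto.
      apply (continuity_pt_mult hF pF); auto.
    + apply (continuity_pt_mult fF (fun t => hF t ^ 3)); auto.
      apply (continuity_pt_comp hF (fun x => x ^ 3)); auto. apply derivable_continuous_pt, derivable_pt_pow.
    + simpl. rewrite Hh0. lra.
    + simpl. rewrite Hh0. ring.
    + intros t Ht. destruct (Hpos t Ht) as [Hf [Hh _]]. apply Rmult_lt_0_compat; auto. apply pow_lt; auto.
    + exists t. split; auto. unfold Rdiv in *. lra.
  - (* [2 (q + h p) / (f h^3) >= 2 p / (f h^2)] with [f h^2 -> 0] *)
    destruct (ratio_unbounded pF (fun t => fF t * hF t ^ 2) ((M + 9) / 2)) as [t [Ht Hr]]; auto.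
    + apply (continuity_pt_mult fF (fun t => hF t ^ 2)); auto.
      apply (continuity_pt_comp hF (fun x => x ^ 2)); auto. apply derivable_continuous_pt, derivable_pt_pow.
    + simpl. rewrite Hh0. ring.
    + intros t Ht. destruct (Hpos t Ht) as [Hf [Hh _]]. apply Rmult_lt_0_compat; auto. apply pow_lt; auto.
    + exists t. split; auto.
      destruct (Hpos t Ht) as [Hf [Hh Hq]].
      assert (Hd : fF t * hF t ^ 3 > 0) by (apply Rmult_lt_0_compat; auto; apply pow_lt; auto).
      assert (E : (qF t + hF t * pF t) / (fF t * hF t ^ 3)
                  = qF t / (fF t * hF t ^ 3) + pF t / (fF t * hF t ^ 2)) by (field; lra).
      assert (qF t / (fF t * hF t ^ 3) >= 0) by (apply Rle_ge; unfold Rdiv; apply Rmult_le_pos; [lra | left; apply Rinv_0_lt_compat; lra]).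
      lra.
Qed.

(** ** The Hessian-degenerate boundary point *)

Section Boundary.
Variables (d : nat -> nat -> nat -> R) (y0 : vec).
Hypothesis f0_pos : cubic d y0 > 0.
Hypothesis H0_zero : Hdet d y0 = 0.
Hypothesis B0_psd : forall x, qform (Bm d y0) x >= 0.
Hypothesis B0_nonzero : ~ agree3 (Bm d y0) (fun _ _ => 0).

Local Notation A0 := (hess d y0).
Local Notation f0 := (cubic d y0).

(** Since [H(y0) = 0], [B(y0) = -(f0^2/2) adj A0]; hence [adj A0] is negative
    semidefinite and has a negative diagonal entry. *)
Lemma B0_eq p q : (p < 3)%nat -> (q < 3)%nat -> Bm d y0 p q = - (f0 ^ 2 / 2) * adj3 A0 p q.
Proof. intros Hp Hq. rewrite Bm_eq by auto. fold (Hdet d y0). rewrite H0_zero. field. Qed.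

Lemma adjA0_nsd x : qform (adj3 A0) x <= 0.
Proof.
  specialize (B0_psd x).
  replace (qform (Bm d y0) x) with (- (f0 ^ 2 / 2) * qform (adj3 A0) x) in B0_psd
    by (unfold qform, sum3; rewrite !B0_eq by lia; ring).
  assert (f0 ^ 2 / 2 > 0) by (apply Rdiv_lt_0_compat; [apply pow_lt|]; lra).
  nra.
Qed.

Lemma adjA0_neg_diag : exists m, (m < 3)%nat /\ adj3 A0 m m < 0.
Proof.
  apply NNPP. intro Hno. apply B0_nonzero. intros p q Hp Hq. rewrite B0_eq by auto.
  rewrite (nsd_zero_diag (adj3 A0)); auto.
  - ring.
  - apply symm_adj, hess_symm.
  - apply adjA0_nsd.
  - intros m Hm. apply Rnot_lt_ge. intro Hneg. apply Hno. exists m. auto.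
Qed.

Section RankOne.
Variable m : nat.
Hypothesis m_lt : (m < 3)%nat.
Hypothesis alpha_neg : adj3 A0 m m < 0.

(** [adj A0 = w w^T / alpha] with [w] the [m]-th column and [alpha = w_m];
    [w] spans the kernel of [A0]. *)
Local Notation alpha := (adj3 A0 m m).
Local Notation w := (fun p => adj3 A0 p m).

Lemma A0_w k : (k < 3)%nat -> mv A0 w k = 0.
Proof. intro Hk. apply adj_col_kernel; auto. Qed.

Lemma rank_one_sum (N : mat) :
  alpha * sum3 (fun p => sum3 (fun q => adj3 A0 p q * N p q))
  = sum3 (fun p => sum3 (fun q => w p * w q * N p q)).
Proof.
  transitivity (sum3 (fun p => sum3 (fun q => adj3 A0 p q * alpha * N p q)));
    [unfold sum3; ring|].
  apply sum3_ext; intros p Hp. apply sum3_ext; intros q Hq.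
  rewrite (adj_rank_one A0 (hess_symm d y0) H0_zero p q m) by auto. reflexivity.
Qed.

Lemma alpha_w_gradH :
  alpha * dot w (fun p => dHdet d p y0) = dot (mv (hess d w) w) w.
Proof.
  transitivity (sum3 (fun p => w p * (alpha * dHdet d p y0))); [unfold dot, sum3; ring|].
  transitivity (sum3 (fun p => w p * sum3 (fun k => sum3 (fun l => w k * w l * third d p l k)))).
  { apply sum3_ext; intros p Hp. f_equal. rewrite <- rank_one_sum. reflexivity. }
  unfold dot, mv, hess, third, sym3, sum3. ring.
Qed.

Lemma Q0_eq : alpha * Qterm d y0 = - (f0 ^ 2 / 2) * dot w (fun p => dHdet d p y0) ^ 2.
Proof.
  transitivity (- (f0 ^ 2 / 2) *
    (alpha * sum3 (fun p => sum3 (fun q => adj3 A0 p q * (dHdet d p y0 * dHdet d q y0))))).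
  { unfold Qterm, sum3. rewrite !B0_eq by lia. ring. }
  rewrite rank_one_sum. unfold dot, sum3. ring.
Qed.

Lemma P0_eq : alpha * Pterm d y0 = f0 ^ 2 * tr3 (mul3 A0 (adj3 (hess d w))).
Proof.
  transitivity ((f0 ^ 2 / 2) *
    (alpha * sum3 (fun p => sum3 (fun q => adj3 A0 p q * ddHdet d p q y0)))).
  { unfold Pterm, sum3. rewrite !B0_eq by lia. ring. }
  rewrite rank_one_sum. unfold ddHdet.
  rewrite lincomb_mixadj_tr, <- hess_lincomb, mixadj_diag_tr. field.
Qed.

(** [y0] (with [y0^T A0 y0 = 6 f0 > 0]) is not parallel to [w]. *)
Lemma cross_y0_w_pos : dot (cross y0 w) (cross y0 w) > 0.
Proof.
  apply (cross_pos A0 y0 w m (hess_symm d y0) m_lt); [lra | | apply A0_w].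
  pose proof (cubic_euler d y0). lra.
Qed.

Lemma P0_pos : dot (mv (hess d w) w) w = 0 -> nonzero3 (mv (hess d w) w) -> Pterm d y0 > 0.
Proof.
  intros Hq HEw.
  assert (HEy : forall k, (k < 3)%nat -> mv (hess d w) y0 k = 0)
    by (intros k Hk; rewrite hess_swap; apply A0_w; auto).
  pose proof (cross_identity_pencil A0 (hess d w) y0 w (hess_symm d y0) (hess_symm d w)
                A0_w HEy Hq) as Hid.
  replace (qform A0 y0) with (6 * f0) in Hid by (rewrite cubic_euler; field).
  pose proof cross_y0_w_pos. pose proof (dot_self_pos _ HEw).
  assert (Htr : tr3 (mul3 A0 (adj3 (hess d w))) < 0) by nra.
  pose proof P0_eq. assert (f0 ^ 2 > 0) by (apply pow_lt; lra). nra.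
Qed.

(** The remaining case [A(w) w = 0] is impossible when [H > 0] on a segment
    leaving [y0]: for [X = A(seg t)] one has [X w . y0 = X w . w = 0], so
    [det X |y0 x w|^2 = -(y0^T X y0) |X w|^2 <= 0] for small [t]. *)
Lemma Aw_w_nonzero z : (forall t, 0 < t <= 1 -> Hdet d (seg y0 z t) > 0) ->
  nonzero3 (mv (hess d w) w).
Proof.
  intros Hline. apply NNPP. intro HEw0. pose proof (not_nonzero3 _ HEw0) as HEw.
  destruct (cont_at0_near (fun t => qform (hess d (seg y0 z t)) y0) (3 * f0)
              (seg_cont_qform _ y0 (mat_seg_cont_hess d) y0 z 0) ltac:(lra)) as [a [Ha Hat]].
  destruct (pick_small a Ha) as [t [Ht Hta]].
  specialize (Hat t ltac:(lra)). cbv beta in Hat. rewrite seg_at0 in Hat.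
  pose proof (cubic_euler d y0). apply Rabs_def2 in Hat.
  set (X := hess d (seg y0 z t)) in *.
  assert (H1 : dot (mv X w) y0 = 0) by (unfold X; rewrite dot_hess, dot_comm; apply dot_zero_l, A0_w).
  assert (H2 : dot (mv X w) w = 0) by (unfold X; rewrite dot_hess, dot_comm; apply dot_zero_l, HEw).
  pose proof (cross_identity X y0 w (hess_symm d _) H1 H2) as Hid.
  assert (HdetX : det3 X > 0) by exact (Hline t Ht).
  assert (HqX : qform X y0 > 0) by lra.
  pose proof cross_y0_w_pos. pose proof (dot_self_nonneg (mv X w)). nra.
Qed.

End RankOne.

Lemma boundary_dichotomy z : (forall t, 0 < t <= 1 -> Hdet d (seg y0 z t) > 0) ->
  Qterm d y0 > 0 \/ Pterm d y0 > 0.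
Proof.
  intro Hline.
  destruct adjA0_neg_diag as [m [Hm Halpha]].
  destruct (Req_dec (dot (mv (hess d (fun p => adj3 A0 p m))
                        (fun p => adj3 A0 p m)) (fun p => adj3 A0 p m)) 0) as [Hq|Hq].
  - right. apply (P0_pos m Hm Halpha Hq), (Aw_w_nonzero m Hm Halpha z Hline).
  - left. pose proof (alpha_w_gradH m Hm) as Hg. pose proof (Q0_eq m Hm) as HQ.
    set (g := dot (fun p => adj3 A0 p m) (fun p => dHdet d p y0)) in *.
    assert (Hne : g <> 0) by (intro Hc; rewrite Hc, Rmult_0_r in Hg; auto).
    assert (Hg2 : g ^ 2 > 0) by (rewrite <- Rsqr_pow2; apply Rsqr_pos_lt; auto).
    assert (Hc : f0 ^ 2 / 2 > 0) by (apply Rdiv_lt_0_compat; [apply pow_lt|]; lra).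
    assert (adj3 A0 m m * Qterm d y0 < 0) by (rewrite HQ; nra).
    nra.
Qed.

End Boundary.

Lemma limit_point_facts d K y0 z : kahler_cone_like (cubic d) K -> in_boundary K y0 -> K z ->
  cubic d y0 <> 0 -> cubic d y0 > 0 /\ forall x, qform (Bm d y0) x >= 0.
Proof.
  intros HK Hb Hz Hf0.
  assert (Hfacts := fun t Ht => kahler_point_facts d K _ HK (seg_in_cone _ K y0 z t HK Hb Hz Ht)).
  split.
  - assert (G : cubic d (seg y0 z 0) >= 0).
    { apply (lim_nonneg (fun t => cubic d (seg y0 z t))); [apply seg_cont_cubic|].
      intros t Ht. destruct (Hfacts t Ht) as [Hf _]. lra. }
    rewrite seg_at0 in G. lra.
  - intro x. rewrite <- (seg_at0 y0 z).
    apply (lim_nonneg (fun t => qform (Bm d (seg y0 z t)) x)).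
    + apply seg_cont_qform, mat_seg_cont_Bm.
    + intros t Ht. apply (Hfacts t Ht).
Qed.

Lemma Hess_eq d y : Hess (cubic d) y = Hdet d y.
Proof.
  unfold Hess, Hdet. apply det3_ext. intros p q Hp Hq.
  rewrite pd_cubic, pd_grad by auto. reflexivity.
Qed.

Lemma Bmat_agree d y : agree3 (Bmat (cubic d) y) (Bm d y).
Proof.
  unfold Bmat, Bm. apply adj3_ext. intros p q Hp Hq. unfold Gmat, Gm.
  rewrite !pd_cubic, pd_grad by auto. reflexivity.
Qed.

Lemma trace_nonzero M N : tr3 (mul3 M N) <> 0 -> ~ agree3 M (fun _ _ => 0).
Proof.
  intros Htr HM. apply Htr.
  rewrite (tr3_ext _ _ (mul3_ext _ _ N N HM (fun _ _ _ _ => eq_refl))).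
  unfold tr3, mul3, sum3. ring.
Qed.

Theorem lemma3p6 (d : nat -> nat -> nat -> R) (K : vec -> Prop) (y0 : vec) :
  kahler_cone_like (cubic d) K ->
  nonzero3 y0 ->
  in_boundary K y0 ->
  cubic d y0 <> 0 ->
  Hess (cubic d) y0 = 0 ->
  (exists i j, (i < 3)%nat /\ (j < 3)%nat /\
     tr3 (mul3 (Bmat (cubic d) y0) (Cmat (cubic d) i j y0)) <> 0) ->
  forall (eps M : R), eps > 0 ->
    exists y, K y /\ close y y0 eps /\ scal (cubic d) y > M.
Proof.
  intros HK _ Hb Hf0 HH0 [i [j [_ [_ HT]]]] eps M Heps.
  rewrite Hess_eq in HH0.
  (* a point [z] of the cone [eps]-close to [y0]; we follow the segment to it *)
  destruct (proj2 Hb eps Heps) as [z [Hz Hzc]].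
  pose proof (fun t Ht => seg_in_cone _ K y0 z t HK Hb Hz Ht) as Hseg.
  pose proof (fun t Ht => kahler_point_facts d K _ HK (Hseg t Ht)) as Hfacts.
  destruct (limit_point_facts d K y0 z HK Hb Hz Hf0) as [Hf0pos HB0].
  assert (HB0nz : ~ agree3 (Bm d y0) (fun _ _ => 0)).
  { intro HB. apply (trace_nonzero _ _ HT). intros p q Hp Hq.
    rewrite Bmat_agree by auto. apply HB; auto. }
  assert (Hdich : Qterm d y0 > 0 \/ Pterm d y0 > 0)
    by (apply (boundary_dichotomy d y0 Hf0pos HH0 HB0 HB0nz z);
        intros t Ht; apply Hfacts; auto).
  destruct (curvature_expr_unbounded (fun t => cubic d (seg y0 z t)) (fun t => Hdet d (seg y0 z t))
              (fun t => Qterm d (seg y0 z t)) (fun t => Pterm d (seg y0 z t)) M) as [t [Ht Hsc]];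
    try apply seg_cont_cubic; try apply seg_cont_Hdet; try apply seg_cont_Qterm;
    try apply seg_cont_Pterm; cbv beta; rewrite ?seg_at0; auto.
  - intros t Ht. destruct (Hfacts t Ht) as [Hf [Hh HB]]. repeat split; auto. apply HB.
  - exists (seg y0 z t). split; [apply Hseg; auto|]. split; [apply seg_close; auto; lra|].
    destruct (Hfacts t Ht) as [Hf [Hh _]]. rewrite scal_formula by (split; auto). exact Hsc.
Qed.
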